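(* Let $(M,s)$ be a finite pointed epistemic model, $M=(S,R,V)$, and let $\phi$ be a satisfiable formula of $\mathcal{L}$. Suppose that all agents occurring in $\phi$ have non-trivial beliefs in state $s$ of $M$, in the sense that there is a set $S^{ser}\subseteq S$ with $s\in S^{ser}$ such that for each agent $a$ occurring in $\phi$ and each $t\in S^{ser}$ there is $u\in S^{ser}$ with $(t,u)\in R(a)$. Then there is an update $(\mathsf{U},\mathsf{e})$ such that $(M,s)\models\langle\mathsf{U},\mathsf{e}\rangle\phi$.
   Context: Fix a finite set of agents $A$ and countable set of atoms $P$. An epistemic model is $M=(S,R,V)$ with $S$ nonempty, $R:A\to\wp(S\times S)$, $V:P\to\wp(S)$. The language $\mathcal{L}$: $\phi ::= p \mid \neg\phi\mid\phi\wedge\phi\mid[\alpha]\phi$, $\alpha ::= a\mid B^*\mid(\mathsf{U},\mathsf{e})$ ($a\in A$, $B\subseteq A$), with $\langle\alpha\rangle\phi:=\neg[\alpha]\neg\phi$. An update model $\mathsf{U}=(\mathsf{E},\mathsf{R},\mathsf{pre},\mathsf{post})$ has finite nonempty event set $\mathsf{E}$, $\mathsf{R}:A\to\wp(\mathsf{E}\times\mathsf{E})$, $\mathsf{pre}:\mathsf{E}\to\mathcal{L}$ and $\mathsf{post}:\mathsf{E}\to(P\to\mathcal{L})$ with each $\mathsf{post}(\mathsf{e})$ differing from the identity on finitely many atoms; an update is $(\mathsf{U},\mathsf{e})$ with $\mathsf{e}\in\mathsf{E}$. Semantics: atoms via $V$, Booleans as usual, $[a]\phi$ true at $s$ iff $\phi$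 true at all $R(a)$-successors, $[B^*]\phi$ true iff $\phi$ true at all states reachable by the reflexive transitive closure of $\bigcup_{a\in B}R(a)$, and $(M,s)\models[\mathsf{U},\mathsf{e}]\phi$ iff $(M,s)\models\mathsf{pre}(\mathsf{e})$ implies $(M\otimes\mathsf{U},(s,\mathsf{e}))\models\phi$, where $M\otimes\mathsf{U}$ has domain $\{(t,\mathsf{f}) : (M,t)\models\mathsf{pre}(\mathsf{f})\}$, $((t,\mathsf{f}),(u,\mathsf{g}))$ related for $a$ iff $(t,u)\in R(a)$ and $(\mathsf{f},\mathsf{g})\in\mathsf{R}(a)$, and $(t,\mathsf{f})\in V^\otimes(p)$ iff $(M,t)\models\mathsf{post}(\mathsf{f})(p)$. A formula is satisfiable if it is true in some pointed epistemic model. *)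

From mathcomp Require Import all_boot.
From Stdlib Require Import Relations.Relation_Operators.

Set Implicit Arguments.
Unset Strict Implicit.
Unset Printing Implicit Defensive.

Section Lang.
Variables (A : finType) (P : countType).

(* An update model with
   event set 'I_n.+1 (finite, nonempty) is given inline by
   its relations R, preconditions pre and postconditions post; post f is a
   finite list of substitutions (p, psi) meaning post(f)(p) = psi for the
   first pair with first component p, and post(f)(p) = p otherwise. *)
Inductive form : Type :=
| Atom of P
| Neg of form
| And of form & form
| Box of prog & form
with prog : Type :=
| Ag of A
| Star of {set A}
| Upd (n : nat) (R : A -> 'I_n.+1 -> 'I_n.+1 -> bool)
      (pre : 'I_n.+1 -> form) (post : 'I_n.+1 -> seq (P * form))
      (e : 'I_n.+1).

Definition Dia (a : prog) (f : form) : form := Neg (Box a (Neg f)).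

Record model (S : Type) := Model {
  acc : A -> S -> S -> Prop;
  valu : P -> S -> Prop }.

Definition product_model (S : Type) (M : model S) (n : nat)
  (Rn : A -> 'I_n.+1 -> 'I_n.+1 -> bool)
  (D : S -> 'I_n.+1 -> Prop)
  (V' : P -> S -> 'I_n.+1 -> Prop)
  : model {x : S * 'I_n.+1 | D x.1 x.2} :=
  @Model _ (fun a x y => acc M a (sval x).1 (sval y).1 /\ Rn a (sval x).2 (sval y).2)
           (fun p x => V' p (sval x).1 (sval x).2).

Fixpoint sat (S : Type) (M : model S) (s : S) (f : form) {struct f} : Prop :=
  match f with
  | Atom p => valu M p s
  | Neg g => ~ sat M s g
  | And g h => sat M s g /\ sat M s h
  | Box (Ag a) g => forall t, acc M a s t -> sat M t g
  | Box (Star B) g =>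
      forall t, clos_refl_trans S (fun x y => exists a, a \in B /\ acc M a x y) s t ->
        sat M t g
  | Box (Upd n Rn pre post e) g =>
      forall H : sat M s (pre e),
        sat (product_model M Rn (fun t f => sat M t (pre f))
               (fun p t f =>
                  (fix look (l : seq (P * form)) : Prop :=
                     match l with
                     | nil => valu M p t
                     | (q, psi) :: l' => if q == p then sat M t psi else look l'
                     end) (post f)))
            (exist _ (s, e) H) g
  end.

Fixpoint occurs (a : A) (f : form) {struct f} : Prop :=
  match f with
  | Atom _ => False
  | Neg g => occurs a g
  | And g h => occurs a g \/ occurs a h
  | Box (Ag b) g => b = a \/ occurs a g
  | Box (Star B) g => a \in B \/ occurs a g
  | Box (Upd n _ pre post _) g =>
      (exists f0, occurs a (pre f0)) \/
      (exists f0, (fix occl (l : seq (P * form)) : Prop :=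
                     match l with
                     | nil => False
                     | (_, psi) :: l' => occurs a psi \/ occl l'
                     end) (post f0)) \/
      occurs a g
  end.

Definition satisfiable (f : form) : Prop :=
  exists (S : Type) (M : model S) (s : S), sat M s f.

End Lang.

Arguments acc {A P S} _ _ _ _.
Arguments valu {A P S} _ _ _.
Arguments sat {A P S} M s f.
Arguments occurs {A P} a f.
Arguments Upd {A P n} R pre post e.

(* Let phi hold at x0 in some model N.  Identifying states of N that agree on
   the (finite) closure of phi gives a filtration of N in which phi still holds
   at x0; its finitely many classes are the events of the update.  The event
   relation for a is the image of R(a) on classes, the postconditions reset each
   atom of the closure to its value on the class, and every precondition is a
   formula W that holds on S^ser and such that each W-state has a W-successor
   for every agent of phi (an approximant of the greatest fixpoint of
   X |-> /\_a <a>X, which stabilises because S is finite).  Then relating x with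
   every (t, [x]) with t |= W is a bisimulation, for the agents and atoms of
   phi, between the filtration and M x U, so phi holds at (s, [x0]). *)

From mathcomp Require Import all_boot boolp.
From Stdlib Require Import Relations.Relation_Operators.
From Stdlib Require List.

Set Implicit Arguments.
Unset Strict Implicit.
Unset Printing Implicit Defensive.

Section UpdateLogic.
Variables (A : finType) (P : countType).
Local Notation form := (form A P).
Local Notation model := (model A P).

Section FormInd.
Variable Q : form -> Prop.
Hypothesis Q_Atom : forall p, Q (Atom A p).
Hypothesis Q_Neg : forall g, Q g -> Q (Neg g).
Hypothesis Q_And : forall g h, Q g -> Q h -> Q (And g h).
Hypothesis Q_Ag : forall a g, Q g -> Q (Box (Ag P a) g).
Hypothesis Q_Star : forall B g, Q g -> Q (Box (Star P B) g).
Hypothesis Q_Upd : forall n (R : A -> 'I_n.+1 -> 'I_n.+1 -> bool) pre post e g,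
  (forall f, Q (pre f)) -> (forall f q chi, List.In (q, chi) (post f) -> Q chi) ->
  Q g -> Q (Box (Upd R pre post e) g).

Fixpoint form_nested_ind (phi : form) : Q phi :=
  match phi with
  | Atom p => Q_Atom p
  | Neg g => Q_Neg (form_nested_ind g)
  | And g h => Q_And (form_nested_ind g) (form_nested_ind h)
  | Box (Ag a) g => Q_Ag a (form_nested_ind g)
  | Box (Star B) g => Q_Star B (form_nested_ind g)
  | Box (Upd n R pre post e) g =>
      Q_Upd R e (fun f => form_nested_ind (pre f))
        (fun f => (fix go (l : list (P * form)) :
                      forall q chi, List.In (q, chi) l -> Q chi :=
           match l return forall q chi, List.In (q, chi) l -> Q chi with
           | nil => fun q chi H => False_ind _ H
           | qc :: l' => fun q chi H =>
               match H return Q chi with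
               | or_introl E =>
                   @eq_ind _ qc (fun y => Q y.2) (form_nested_ind qc.2) _ E
               | or_intror H' => go l' q chi H'
               end
           end) (post f))
        (form_nested_ind g)
  end.
End FormInd.

Lemma mem_In (T : eqType) (x : T) (s : seq T) : x \in s -> List.In x s.
Proof. by elim: s => [|y s IH] //=; rewrite inE => /orP [/eqP ->|/IH]; [left|right]. Qed.

(* Besides subformulas, the closure contains [U, f]chi for every event f of an
   update U occurring in phi and every chi in the closure of its argument: the
   filtration lemma needs these to pass through the modality [U, e]. *)
Fixpoint closure (phi : form) : list form :=
  match phi with
  | Atom _ => [:: phi]
  | Neg g => phi :: closure g
  | And g h => phi :: (closure g ++ closure h)%list
  | Box (Ag _) g => phi :: closure g
  | Box (Star _) g => phi :: closure g
  | Box (Upd n R pre post _) g =>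
      phi :: (closure g ++ List.flat_map (fun f =>
         closure (pre f) ++ List.flat_map (fun qc => closure qc.2) (post f) ++
         List.map (Box (Upd R pre post f)) (closure g)) (enum 'I_n.+1))%list
  end.

Lemma closure_self phi : List.In phi (closure phi).
Proof. by case: phi => [p|g|g h|[a|B|n R pre post e] g]; left. Qed.

Lemma closure_And_l g h chi :
  List.In chi (closure g) -> List.In chi (closure (And g h)).
Proof. by move=> chi_g; right; apply: List.in_or_app; left. Qed.

Lemma closure_And_r g h chi :
  List.In chi (closure h) -> List.In chi (closure (And g h)).
Proof. by move=> chi_h; right; apply: List.in_or_app; right. Qed.

Section ClosureUpd.
Variables (n : nat) (R : A -> 'I_n.+1 -> 'I_n.+1 -> bool) (pre : 'I_n.+1 -> form)
  (post : 'I_n.+1 -> list (P * form)) (e : 'I_n.+1) (g : form).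
Local Notation W := (Box (Upd R pre post e) g).

Lemma closure_Upd_arg chi : List.In chi (closure g) -> List.In chi (closure W).
Proof. by move=> chi_g; right; apply: List.in_or_app; left. Qed.

Lemma closure_Upd_event f chi :
  List.In chi (closure (pre f) ++ List.flat_map (fun qc => closure qc.2) (post f) ++
                 List.map (Box (Upd R pre post f)) (closure g))%list ->
  List.In chi (closure W).
Proof.
move=> chi_f; right; apply: List.in_or_app; right; apply/List.in_flat_map.
by exists f; split => //; apply: mem_In; rewrite mem_enum.
Qed.

Lemma closure_Upd_pre f chi : List.In chi (closure (pre f)) -> List.In chi (closure W).
Proof. by move=> chi_f; apply: (@closure_Upd_event f); apply: List.in_or_app; left. Qed.

Lemma closure_Upd_post f q c chi :
  List.In (q, c) (post f) -> List.In chi (closure c) -> List.In chi (closure W).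
Proof.
move=> qc_f chi_c; apply: (@closure_Upd_event f); apply: List.in_or_app; right.
by apply: List.in_or_app; left; apply/List.in_flat_map; exists (q, c).
Qed.

Lemma closure_Upd_box f chi :
  List.In chi (closure g) -> List.In (Box (Upd R pre post f) chi) (closure W).
Proof.
move=> chi_g; apply: (@closure_Upd_event f); apply: List.in_or_app; right.
by apply: List.in_or_app; right; apply: List.in_map.
Qed.
End ClosureUpd.

Definition closure_atoms (phi : form) : seq P :=
  List.flat_map (fun c => if c is Atom p then [:: p] else [::]) (closure phi).

Lemma In_closure_atoms phi p :
  List.In (Atom A p) (closure phi) -> List.In p (closure_atoms phi).
Proof. by move=> p_phi; apply/List.in_flat_map; exists (Atom A p); split; [|left]. Qed.

Definition post_val S (M : model S) (p : P) (t : S) : list (P * form) -> Prop :=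
  fix look l := match l with
                | nil => valu M p t
                | (q, psi) :: l' => if q == p then sat M t psi else look l'
                end.

Lemma post_val_iff S1 S2 (M1 : model S1) (M2 : model S2) p t1 t2 l :
  (forall q chi, List.In (q, chi) l -> (sat M1 t1 chi <-> sat M2 t2 chi)) ->
  (valu M1 p t1 <-> valu M2 p t2) -> (post_val M1 p t1 l <-> post_val M2 p t2 l).
Proof.
move=> post_eq val_eq; elim: l post_eq => [|[q chi] l IH] post_eq //=.
case: (q == p); first by apply: post_eq; left.
by apply: IH => q' chi' qchi_l; apply: (post_eq q'); right.
Qed.

Lemma post_val_map S (M : model S) (F : P -> form) ps p t :
  List.In p ps -> (post_val M p t [seq (q, F q) | q <- ps] <-> sat M t (F p)).
Proof.
elim: ps => [|q ps IH] //= [->|p_ps]; first by rewrite eqxx.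
by case: eqP => [-> //|_]; apply: IH.
Qed.

Definition update_model S (M : model S) n (R : A -> 'I_n.+1 -> 'I_n.+1 -> bool)
    (pre : 'I_n.+1 -> form) (post : 'I_n.+1 -> list (P * form)) :=
  product_model M R (fun t f => sat M t (pre f)) (fun p t f => post_val M p t (post f)).

Lemma sat_Box_Upd S (M : model S) n (R : A -> 'I_n.+1 -> 'I_n.+1 -> bool) pre post f chi x
    (H : sat M x (pre f)) :
  sat M x (Box (Upd R pre post f) chi) <->
  sat (update_model M R pre post) (exist _ (x, f) H) chi.
Proof.
split=> [Mx | Ux H'] /=; first exact: Mx.
by rewrite (Prop_irrelevance H' H).
Qed.

Lemma sat_Box_Upd_transfer S1 S2 (M1 : model S1) (M2 : model S2) (Z : S1 -> S2 -> Prop)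
    n (R : A -> 'I_n.+1 -> 'I_n.+1 -> bool) pre post e g :
  (forall x y, Z x y -> (sat M1 x (pre e) <-> sat M2 y (pre e))) ->
  (forall u v, Z (sval u).1 (sval v).1 /\ (sval u).2 = (sval v).2 ->
     (sat (update_model M1 R pre post) u g <-> sat (update_model M2 R pre post) v g)) ->
  forall x y, Z x y ->
  (sat M1 x (Box (Upd R pre post e) g) <-> sat M2 y (Box (Upd R pre post e) g)).
Proof.
move=> pre_eq g_eq x y Zxy; split=> [U1 H2 | U2 H1].
- have H1 := (pre_eq x y Zxy).2 H2.
  by apply: (g_eq (exist _ (x, e) H1) (exist _ (y, e) H2) (conj Zxy erefl)).1; apply: U1.
- have H2 := (pre_eq x y Zxy).1 H1.
  by apply: (g_eq (exist _ (x, e) H1) (exist _ (y, e) H2) (conj Zxy erefl)).2; apply: U2.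
Qed.

Definition group_acc S (M : model S) (B : {set A}) (x y : S) :=
  exists a, a \in B /\ acc M a x y.

Lemma clos_refl_trans_forth T1 T2 (R1 : T1 -> T1 -> Prop) (R2 : T2 -> T2 -> Prop)
    (Z : T1 -> T2 -> Prop) :
  (forall x y x', Z x y -> R1 x x' -> exists2 y', R2 y y' & Z x' y') ->
  forall x y x', Z x y -> clos_refl_trans _ R1 x x' ->
  exists2 y', clos_refl_trans _ R2 y y' & Z x' y'.
Proof.
move=> forth x y x' Zxy xx'; elim: xx' y Zxy => {x x'} [x x' xx'|x|x x1 x2 _ IH1 _ IH2] y Zxy.
- by have [y' yy' Z'] := forth _ _ _ Zxy xx'; exists y' => //; apply: rt_step.
- by exists y => //; apply: rt_refl.
- have [y1 yy1 Z1] := IH1 _ Zxy; have [y2 y1y2 Z2] := IH2 _ Z1.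
  by exists y2 => //; apply: rt_trans yy1 y1y2.
Qed.

Lemma all_succ_transfer T1 T2 (R1 : T1 -> T1 -> Prop) (R2 : T2 -> T2 -> Prop)
    (Z : T1 -> T2 -> Prop) (Q1 : T1 -> Prop) (Q2 : T2 -> Prop) x y :
  (forall x', R1 x x' -> exists2 y', R2 y y' & Z x' y') ->
  (forall y', R2 y y' -> exists2 x', R1 x x' & Z x' y') ->
  (forall x' y', Z x' y' -> (Q1 x' <-> Q2 y')) ->
  (forall x', R1 x x' -> Q1 x') <-> (forall y', R2 y y' -> Q2 y').
Proof.
move=> forth back ZQ; split=> [all1 y' yy'|all2 x' xx'].
- by have [x' xx' Z'] := back _ yy'; apply/(ZQ _ _ Z')/all1.
- by have [y' yy' Z'] := forth _ xx'; apply/(ZQ _ _ Z')/all2.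
Qed.

Section Bisimulation.
Variables (G : A -> Prop) (Pa : P -> Prop).

Definition bisimulation S1 S2 (M1 : model S1) (M2 : model S2) (Z : S1 -> S2 -> Prop) :=
  [/\ forall p x y, Pa p -> Z x y -> (valu M1 p x <-> valu M2 p y),
      forall a x y x', G a -> Z x y -> acc M1 a x x' -> exists2 y', acc M2 a y y' & Z x' y' &
      forall a x y y', G a -> Z x y -> acc M2 a y y' -> exists2 x', acc M1 a x x' & Z x' y'].

Lemma bisimulation_sym S1 S2 (M1 : model S1) (M2 : model S2) Z :
  bisimulation M1 M2 Z -> bisimulation M2 M1 (fun y x => Z x y).
Proof.
case=> val forth back; split=> [p x y Pp Zyx|a y x y' Ga Zxy yy'|a y x x' Ga Zxy xx'].
- by apply: iff_sym; apply: val.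
- by have [x' ? ?] := back _ _ _ _ Ga Zxy yy'; exists x'.
- by have [y' ? ?] := forth _ _ _ _ Ga Zxy xx'; exists y'.
Qed.

Lemma bisimulation_group_forth S1 S2 (M1 : model S1) (M2 : model S2) Z (B : {set A}) :
  (forall b, b \in B -> G b) -> bisimulation M1 M2 Z ->
  forall x y x', Z x y -> group_acc M1 B x x' -> exists2 y', group_acc M2 B y y' & Z x' y'.
Proof.
move=> GB [_ forth _] x y x' Zxy [b [Bb xx']].
have [y' yy' Z'] := forth _ _ _ _ (GB b Bb) Zxy xx'.
by exists y' => //; exists b.
Qed.

Lemma bisimulation_Box_Ag S1 S2 (M1 : model S1) (M2 : model S2) Z a g :
  G a -> bisimulation M1 M2 Z -> (forall x y, Z x y -> (sat M1 x g <-> sat M2 y g)) ->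
  forall x y, Z x y -> (sat M1 x (Box (Ag P a) g) <-> sat M2 y (Box (Ag P a) g)).
Proof.
move=> Ga [_ forth back] g_eq x y Zxy.
exact: (all_succ_transfer (Q1 := sat M1 ^~ g) (Q2 := sat M2 ^~ g)
  (fun x' => forth a x y x' Ga Zxy) (fun y' => back a x y y' Ga Zxy) g_eq).
Qed.

Lemma bisimulation_Box_Star S1 S2 (M1 : model S1) (M2 : model S2) Z (B : {set A}) g :
  (forall b, b \in B -> G b) -> bisimulation M1 M2 Z ->
  (forall x y, Z x y -> (sat M1 x g <-> sat M2 y g)) ->
  forall x y, Z x y -> (sat M1 x (Box (Star P B) g) <-> sat M2 y (Box (Star P B) g)).
Proof.
move=> GB bis g_eq x y Zxy.
apply: (all_succ_transfer (Q1 := sat M1 ^~ g) (Q2 := sat M2 ^~ g) _ _ g_eq) => [x'|y'].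
  exact: clos_refl_trans_forth (bisimulation_group_forth GB bis) _ _ _ Zxy.
move=> yy'; have [x' xx' Z'] :=
  clos_refl_trans_forth (bisimulation_group_forth GB (bisimulation_sym bis)) Zxy yy'.
by exists x'.
Qed.

Lemma bisimulation_update S1 S2 (M1 : model S1) (M2 : model S2) Z n
    (R : A -> 'I_n.+1 -> 'I_n.+1 -> bool) pre post :
  bisimulation M1 M2 Z ->
  (forall f x y, Z x y -> (sat M1 x (pre f) <-> sat M2 y (pre f))) ->
  (forall f q c x y, List.In (q, c) (post f) -> Z x y -> (sat M1 x c <-> sat M2 y c)) ->
  bisimulation (update_model M1 R pre post) (update_model M2 R pre post)
    (fun u v => Z (sval u).1 (sval v).1 /\ (sval u).2 = (sval v).2).
Proof.
case=> val forth back pre_eq post_eq; split.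
- move=> p [[x f] Hx] [[y f'] Hy] Pp [/= Zxy Eff]; subst f' => /=.
  by apply: post_val_iff; [move=> q c qc_f; apply: post_eq qc_f Zxy | apply: val].
- move=> a [[x f] Hx] [[y f0] Hy] [[x' f'] Hx'] Ga [/= Zxy Ef] [/= xx' Rff']; subst f0.
  have [y' yy' Z'] := forth _ _ _ _ Ga Zxy xx'.
  by exists (exist _ (y', f') ((pre_eq f' x' y' Z').1 Hx')).
- move=> a [[x f] Hx] [[y f0] Hy] [[y' f'] Hy'] Ga [/= Zxy Ef] [/= yy' Rff']; subst f0.
  have [x' xx' Z'] := back _ _ _ _ Ga Zxy yy'.
  by exists (exist _ (x', f') ((pre_eq f' x' y' Z').2 Hy')).
Qed.

Lemma bisimulation_sat phi : forall S1 S2 (M1 : model S1) (M2 : model S2) Z,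
  (forall a, occurs a phi -> G a) ->
  (forall p, List.In (Atom A p) (closure phi) -> Pa p) ->
  bisimulation M1 M2 Z -> forall x y, Z x y -> (sat M1 x phi <-> sat M2 y phi).
Proof.
elim/form_nested_ind: phi.
- by move=> p S1 S2 M1 M2 Z _ HP [val _ _] x y; apply: val; apply: HP; left.
- move=> g IH S1 S2 M1 M2 Z HG HP bis x y Zxy /=.
  by have := IH _ _ _ _ _ HG (fun p H => HP p (or_intror H)) bis x y Zxy; tauto.
- move=> g h IHg IHh S1 S2 M1 M2 Z HG HP bis x y Zxy /=.
  have := IHg _ _ _ _ _ (fun a H => HG a (or_introl H))
    (fun p H => HP p (closure_And_l h H)) bis x y Zxy.
  have := IHh _ _ _ _ _ (fun a H => HG a (or_intror H))
    (fun p H => HP p (closure_And_r g H)) bis x y Zxy.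
  tauto.
- move=> a g IH S1 S2 M1 M2 Z HG HP bis.
  have IHg := IH _ _ _ _ _ (fun b H => HG b (or_intror H)) (fun p H => HP p (or_intror H)) bis.
  exact: bisimulation_Box_Ag (HG a (or_introl erefl)) bis IHg.
- move=> B g IH S1 S2 M1 M2 Z HG HP bis.
  have IHg := IH _ _ _ _ _ (fun b H => HG b (or_intror H)) (fun p H => HP p (or_intror H)) bis.
  exact: bisimulation_Box_Star (fun b Bb => HG b (or_introl Bb)) bis IHg.
- move=> n R pre post e g IHpre IHpost IHg S1 S2 M1 M2 Z HG HP bis.
  have pre_eq f : forall x y, Z x y -> (sat M1 x (pre f) <-> sat M2 y (pre f)).
    apply: (IHpre f _ _ _ _ _ _ _ bis); first by move=> a Ha; apply: HG; left; exists f.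
    by move=> p Hp; apply: HP; apply: closure_Upd_pre Hp.
  have post_eq f q c : forall x y, List.In (q, c) (post f) -> Z x y ->
      (sat M1 x c <-> sat M2 y c).
    move=> x y qc_f; apply: (IHpost f q c qc_f _ _ _ _ _ _ _ bis).
    + move=> a Ha; apply: HG; right; left; exists f.
      by elim: (post f) qc_f => [|[q' c'] l IHl] //= [[_ ->]|/IHl]; [left|right].
    + by move=> p Hp; apply: HP; apply: closure_Upd_post qc_f Hp.
  have IHg' := IHg _ _ _ _ _ (fun a H => HG a (or_intror (or_intror H)))
    (fun p H => HP p (closure_Upd_arg R pre post e H))
    (bisimulation_update R bis pre_eq post_eq).
  exact: sat_Box_Upd_transfer (pre_eq e) IHg'.
Qed.
End Bisimulation.

Definition filtration S T (K : model S) (k : S -> T) : model S :=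
  Model (fun a x y => exists x' y', [/\ k x = k x', k y = k y' & acc K a x' y'])
        (fun p x => exists2 x', k x = k x' & valu K p x').

Section FiltrationUpdate.
Variables (S T : Type) (K : model S) (k : S -> T) (Pa : P -> Prop) (n : nat)
  (R : A -> 'I_n.+1 -> 'I_n.+1 -> bool) (pre : 'I_n.+1 -> form)
  (post : 'I_n.+1 -> list (P * form)).
Local Notation KF := (filtration K k).
Hypothesis pre_k : forall f x y, k x = k y -> (sat K x (pre f) <-> sat K y (pre f)).
Hypothesis post_k : forall f q c x y, List.In (q, c) (post f) -> k x = k y ->
  (sat K x c <-> sat K y c).
Hypothesis val_k : forall p x y, Pa p -> k x = k y -> (valu K p x <-> valu K p y).
Hypothesis pre_filtration : forall f x, sat K x (pre f) <-> sat KF x (pre f).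
Hypothesis post_filtration : forall f q c, List.In (q, c) (post f) ->
  forall x, sat K x c <-> sat KF x c.

Definition update_kernel (u : {x : S * 'I_n.+1 | sat K x.1 (pre x.2)}) : T * 'I_n.+1 :=
  (k (sval u).1, (sval u).2).

Lemma post_val_filtration p f x x' : Pa p -> k x = k x' ->
  (post_val K p x' (post f) <-> post_val KF p x (post f)).
Proof.
move=> Pp kxx'; apply: (@iff_trans _ (post_val K p x (post f))).
  apply: post_val_iff; last by apply: val_k.
  by move=> q c qc_f; apply: post_k qc_f _.
apply: post_val_iff => [q c qc_f|]; first exact: (post_filtration qc_f).
by split=> [Kx|[x1 kxx1 Kx1]]; [exists x|apply/(val_k Pp kxx1)].
Qed.

Lemma filtration_update_bisim :
  bisimulation (fun _ => True) Pa (filtration (update_model K R pre post) update_kernel)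
    (update_model KF R pre post)
    (fun u v => (sval u).1 = (sval v).1 /\ (sval u).2 = (sval v).2).
Proof.
split.
- move=> p [[x f] Kx] [[y f'] Ky] Pp /= [<- <-]; split=> [[[[x1 f1] Kx1] [/= kxx1 <-]]|].
    by rewrite -(@post_val_filtration p f x x1 Pp kxx1).
  by move=> Fx; exists (exist _ (x, f) Kx) => //; apply/(@post_val_filtration p f x x Pp erefl).
- move=> a [[x f] Kx] [[y f'] Ky] [[z g] Kz] _ /= [<- <-].
  move=> [[[x1 f1] Kx1] [[[z1 g1] Kz1] [[/= kxx1 <-] [/= kzz1 <-] [/= xz1 Rfg]]]].
  exists (exist _ (z, g) ((pre_filtration g z).1 Kz)) => //=.
  by split=> //; exists x1, z1.
- move=> a [[x f] Kx] [[y f'] Fy] [[z g] Fz] _ /= [<- <-].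
  move=> [[x1 [z1 [kxx1 kzz1 xz1]]] Rfg].
  have Kz1 : sat K z1 (pre g) by apply/(pre_k _ kzz1)/pre_filtration.
  exists (exist _ (z, g) ((pre_k _ kzz1).2 Kz1)) => //=.
  exists (exist _ (x1, f) ((pre_k _ kxx1).1 Kx)), (exist _ (z1, g) Kz1).
  by split; rewrite /update_kernel /= ?kxx1 ?kzz1.
Qed.
End FiltrationUpdate.

Lemma update_kernel_invariant S T (K : model S) (k : S -> T) n
    (R : A -> 'I_n.+1 -> 'I_n.+1 -> bool) pre post chi :
  (forall f x y, k x = k y ->
     (sat K x (Box (Upd R pre post f) chi) <-> sat K y (Box (Upd R pre post f) chi))) ->
  forall u v, update_kernel k u = update_kernel k v ->
  (sat (update_model K R pre post) u chi <-> sat (update_model K R pre post) v chi).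
Proof.
move=> box_k [[y f] Ky] [[y' f'] Ky'] [/= kyy' Eff]; subst f'.
by split=> /sat_Box_Upd /(box_k _ _ _ kyy'); apply.
Qed.

Lemma filtration_Box_Ag S T (K : model S) (k : S -> T) a g :
  (forall x y, k x = k y -> (sat K x (Box (Ag P a) g) <-> sat K y (Box (Ag P a) g))) ->
  (forall x y, k x = k y -> (sat K x g <-> sat K y g)) ->
  (forall x, sat K x g <-> sat (filtration K k) x g) ->
  forall x, sat K x (Box (Ag P a) g) <-> sat (filtration K k) x (Box (Ag P a) g).
Proof.
move=> box_k g_k g_filt x; split=> [Kx y [x1 [y1 [kxx1 kyy1 xy1]]] | Fx y xy].
- by apply/g_filt/(g_k _ _ kyy1); apply: (box_k _ _ kxx1).1 Kx _ xy1.
- by apply/g_filt/Fx; exists x, y.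
Qed.

Lemma filtration_Box_Star S T (K : model S) (k : S -> T) (B : {set A}) g :
  (forall x y, k x = k y -> (sat K x (Box (Star P B) g) <-> sat K y (Box (Star P B) g))) ->
  (forall x, sat K x g <-> sat (filtration K k) x g) ->
  forall x, sat K x (Box (Star P B) g) <-> sat (filtration K k) x (Box (Star P B) g).
Proof.
move=> box_k g_filt x; split=> [Kx t xt | Fx t xt].
- have box_rt y z : clos_refl_trans _ (group_acc (filtration K k) B) y z ->
      sat K y (Box (Star P B) g) -> sat K z (Box (Star P B) g).
    elim=> {y z} [y z [b [Bb [y1 [z1 [kyy1 kzz1 yz1]]]]] Ky|//|y y' z _ IH1 _ IH2 Ky].
    + apply/(box_k _ _ kzz1) => z' z1z'; have /= Ky1 := (box_k _ _ kyy1).1 Ky.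
      by apply: Ky1; apply: rt_trans z1z'; apply: rt_step; exists b.
    + exact/IH2/IH1.
  by apply/g_filt; apply: (box_rt _ _ xt Kx); apply: rt_refl.
- have K_F y z y' : y = z -> group_acc K B y y' ->
      exists2 z', group_acc (filtration K k) B z z' & y' = z'.
    by move=> yz [b [Bb yy']]; subst z; exists y' => //; exists b; split=> //; exists y, y'.
  have [t' Fxt ->] := clos_refl_trans_forth K_F erefl xt.
  by apply/g_filt; apply: Fx.
Qed.

Lemma filtration_sat phi : forall S T (K : model S) (k : S -> T),
  (forall chi, List.In chi (closure phi) ->
     forall x y, k x = k y -> (sat K x chi <-> sat K y chi)) ->
  forall x, sat K x phi <-> sat (filtration K k) x phi.
Proof.
elim/form_nested_ind: phi.
- move=> p S T K k cl_k x /=; split=> [Kx|[x' kxx' Kx']]; first by exists x.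
  by apply/(cl_k _ (closure_self _) _ _ kxx').
- move=> g IH S T K k cl_k x /=.
  by have := IH _ _ K k (fun c H => cl_k c (or_intror H)) x; tauto.
- move=> g h IHg IHh S T K k cl_k x /=.
  have := IHg _ _ K k (fun c H => cl_k c (closure_And_l h H)) x.
  have := IHh _ _ K k (fun c H => cl_k c (closure_And_r g H)) x.
  tauto.
- move=> a g IH S T K k cl_k.
  apply: filtration_Box_Ag; first exact: cl_k (closure_self _).
    exact: cl_k (or_intror (closure_self g)).
  by apply: IH => c H; apply: cl_k; right.
- move=> B g IH S T K k cl_k.
  apply: filtration_Box_Star; first exact: cl_k (closure_self _).
  by apply: IH => c H; apply: cl_k; right.
- move=> n R pre post e g IHpre IHpost IHg S T K k cl_k x.
  have pre_k f : forall x y, k x = k y -> (sat K x (pre f) <-> sat K y (pre f)).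
    by apply: cl_k; apply: closure_Upd_pre (closure_self _).
  have post_k f q c y z : List.In (q, c) (post f) -> k y = k z ->
      (sat K y c <-> sat K z c).
    by move=> qc_f; apply: cl_k; apply: closure_Upd_post qc_f (closure_self _).
  have val_k p y z : List.In (Atom A p) (closure g) -> k y = k z ->
      (valu K p y <-> valu K p z).
    by move=> p_g; apply: (cl_k (Atom A p)); apply: closure_Upd_arg p_g.
  have pre_filt f := IHpre f _ _ K k (fun c H => cl_k c (closure_Upd_pre R post e g H)).
  have post_filt f q c qc_f := IHpost f q c qc_f _ _ K k
    (fun c' H => cl_k c' (closure_Upd_post R pre e g qc_f H)).
  have bis := filtration_update_bisim R pre_k post_k val_k pre_filt post_filt.
  have g_filt := IHg _ _ _ _ (fun chi chi_g => update_kernel_invariant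
    (fun f => cl_k _ (closure_Upd_box R pre post e f chi_g))).
  have g_bis := bisimulation_sat (fun a _ => I) (fun p H => H) bis.
  apply: (sat_Box_Upd_transfer (Z := eq) _ _ erefl) => [y z <- | u v uv].
    exact: pre_filt.
  exact: iff_trans (g_filt u) (g_bis u v uv).
Qed.


(* The atom set P may be empty, so the constant truth is built from an
   arbitrary formula. *)
Definition verum (chi : form) : form := Neg (And chi (Neg chi)).

Lemma sat_verum S (M : model S) chi t : sat M t (verum chi).
Proof. by move=> /= []. Qed.

Section SerialFormula.
Variables (S : Type) (M : model S) (G : A -> Prop) (chi : form).

Definition dia_all (F : form) : form :=
  foldr (fun a F' => And (Dia (Ag P a) F) F') (verum chi) [seq a <- enum A | `[< G a >]].

Lemma sat_dia_all F t :
  sat M t (dia_all F) <-> forall a, G a -> exists2 u, acc M a t u & sat M u F.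
Proof.
have sat_foldr (l : seq A) :
    sat M t (foldr (fun a F' => And (Dia (Ag P a) F) F') (verum chi) l) <->
    forall a, a \in l -> exists2 u, acc M a t u & sat M u F.
  elim: l => [|b l IH]; first by split=> // _; apply: sat_verum.
  split=> [[dia_b /IH dia_l] a | dia].
  + rewrite inE => /predU1P [->|/dia_l //].
    by apply: contrapT => no_u; apply: dia_b => u tu Fu; apply: no_u; exists u.
  + split; last by apply/IH => a al; apply: dia; rewrite inE al orbT.
    by have [u tu Fu] := dia b (mem_head _ _); move=> all_u; apply: all_u tu Fu.
apply: (iff_trans (sat_foldr _)); split=> dia a.
- by move=> Ga; apply: dia; rewrite mem_filter mem_enum andbT; apply/asboolP.
- by rewrite mem_filter mem_enum andbT => /asboolP; apply: dia.
Qed.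

Fixpoint serial_approx (m : nat) : form :=
  if m is m'.+1 then dia_all (serial_approx m') else verum chi.
End SerialFormula.

Lemma nonincreasing_chain_stable (T : finType) (X : nat -> {set T}) :
  (forall m, X m.+1 \subset X m) -> exists m, X m.+1 = X m.
Proof.
move=> decr; apply: contrapT => /forallNP neq.
suff card_bound m : #|X m| + m <= #|T|.
  by have := card_bound #|T|.+1; rewrite addnS ltnNge leq_addl.
elim: m => [|m IH]; first by rewrite addn0 max_card.
rewrite addnS (leq_trans _ IH) // ltn_add2r proper_card // properEneq decr andbT.
by apply/eqP; apply: neq.
Qed.

Lemma exists_serial_formula (S : finType) (M : model S) (G : A -> Prop) (chi : form)
    (Sser : {set S}) :
  (forall a, G a -> forall t, t \in Sser -> exists2 u, u \in Sser & acc M a t u) ->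
  exists W : form, (forall t, t \in Sser -> sat M t W) /\
    forall t, sat M t W -> forall a, G a -> exists2 u, acc M a t u & sat M u W.
Proof.
move=> serial.
pose X m := [set t | `[< sat M t (serial_approx G chi m) >]].
have X_decr m : X m.+1 \subset X m.
  elim: m => [|m IH]; apply/subsetP => t; rewrite !inE => /asboolP Xt; apply/asboolP.
    exact: sat_verum.
  apply/sat_dia_all => a Ga; have [u tu Xu] := (sat_dia_all _ _ _ _ _).1 Xt a Ga.
  exists u => //; suff : u \in X m by rewrite inE => /asboolP.
  by apply: (subsetP IH); rewrite inE; apply/asboolP.
have [m X_stable] := nonincreasing_chain_stable X_decr.
exists (serial_approx G chi m); split.
- elim: (m) => [|j IH] t t_ser; first exact: sat_verum.
  apply/sat_dia_all => a Ga; have [u u_ser tu] := serial a Ga t t_ser.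
  by exists u => //; apply: IH.
- move=> t Wt; have : t \in X m.+1 by rewrite X_stable inE; apply/asboolP.
  by rewrite inE => /asboolP /sat_dia_all.
Qed.

Section ClosureClasses.
Variables (phi : form) (S : Type) (N : model S).

Definition closure_type (x : S) : {ffun 'I_(length (closure phi)) -> bool} :=
  [ffun i : 'I_(length (closure phi)) => `[< sat N x (List.nth i (closure phi) phi) >]].

Definition closure_class (x : S) : 'I_#|{ffun 'I_(length (closure phi)) -> bool}|.+1 :=
  widen_ord (leqnSn _) (enum_rank (closure_type x)).

Lemma closure_class_agree chi x y : List.In chi (closure phi) ->
  closure_class x = closure_class y -> (sat N x chi <-> sat N y chi).
Proof.
case/(List.In_nth _ _ phi) => i [/ltP lt_i <-] /(congr1 val) /= /val_inj /enum_rank_inj.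
by move=> /ffunP /(_ (Ordinal lt_i)); rewrite !ffunE; apply: asbool_eq_equiv.
Qed.
End ClosureClasses.

Section ClassUpdate.
Variables (SN S : Type) (N : model SN) (M : model S) (m : nat) (cd : SN -> 'I_m.+1)
  (G : A -> Prop) (ps : seq P) (W chi : form).
Hypothesis W_serial : forall t, sat M t W -> forall a, G a -> exists2 u, acc M a t u & sat M u W.

Definition image_rel (a : A) (i j : 'I_m.+1) : bool :=
  `[< exists x y, [/\ cd x = i, cd y = j & acc N a x y] >].

Definition class_post (i : 'I_m.+1) : seq (P * form) :=
  [seq (p, if `[< exists2 x, cd x = i & valu N p x >] then verum chi else Neg (verum chi))
  | p <- ps].

Lemma filtration_class_update_bisim :
  bisimulation G (fun p => List.In p ps) (filtration N cd)
    (update_model M image_rel (fun=> W) class_post) (fun x u => cd x = (sval u).2).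
Proof.
split.
- move=> p x [[t i] Wt] p_ps /= cdx; apply: iff_sym; apply: iff_trans (post_val_map _ _ _ p_ps) _.
  case: asboolP => [[x' cdx' Nx'] | no_x]; split.
  + by move=> _; exists x' => //; rewrite cdx cdx'.
  + by move=> _; apply: sat_verum.
  + by move=> /= no; case: no; apply: sat_verum.
  + by move=> [x' cdxx' Nx']; case: no_x; exists x' => //; rewrite -cdxx'.
- move=> a x [[t i] Wt] y Ga /= cdx [x1 [y1 [cdxx1 cdyy1 xy1]]].
  have [u tu Wu] := W_serial Wt Ga.
  exists (exist _ (u, cd y) Wu) => //; split=> //=.
  by apply/asboolP; exists x1, y1; split; rewrite -?cdx.
- move=> a x [[t i] Wt] [[u j] Wu] Ga /= cdx [tu /asboolP [x1 [y1 [cdx1 cdy1 xy1]]]].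
  by exists y1 => //; exists x1, y1; split; rewrite ?cdx.
Qed.
End ClassUpdate.

End UpdateLogic.

Theorem corollary2 (A : finType) (P : countType) (S : finType)
  (M : model A P S) (s : S) (phi : form A P) :
  satisfiable phi ->
  (exists Sser : {set S}, s \in Sser /\
     forall a, occurs a phi ->
       forall t, t \in Sser -> exists2 u, u \in Sser & acc M a t u) ->
  exists (n : nat) (Rn : A -> 'I_n.+1 -> 'I_n.+1 -> bool)
         (pre : 'I_n.+1 -> form A P) (post : 'I_n.+1 -> seq (P * form A P))
         (e : 'I_n.+1),
    sat M s (Dia (Upd Rn pre post e) phi).
Proof.
move=> [SN [N [x0 Nx0]]] [Sser [s_ser serial]].
have [W [W_Sser W_serial]] := exists_serial_formula phi serial.
pose cd := closure_class phi N.
have cd_agree chi : List.In chi (closure phi) ->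
    forall x y, cd x = cd y -> (sat N x chi <-> sat N y chi).
  by move=> chi_phi x y; apply: closure_class_agree.
have Fx0 := (filtration_sat cd_agree x0).1 Nx0.
exists _, (image_rel N cd), (fun=> W), (class_post N cd (closure_atoms phi) phi), (cd x0).
move=> no_update; apply: (no_update (W_Sser s s_ser)).
have bis := filtration_class_update_bisim N cd (closure_atoms phi) phi W_serial.
apply: (bisimulation_sat (fun a occ => occ) (@In_closure_atoms _ _ phi) bis
  (y := exist _ (s, cd x0) (W_Sser s s_ser)) erefl).1 Fx0.
Qed.
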